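(* Let $p:[0,1]\to\mathbb{R}_{\ge0}$ be a monotone, continuous, convex pricing function with $p(0)=0$, let $v(x)=\tau x$ with $\tau\ge0$, let $S\subset\mathbb{R}_{\ge0}$ be a finite set with $\tau\in S$, and let $\hat p=\mathrm{disc}(p,S)$. Then for every $b\in\mathbb{R}_{\ge0}$, $r(\hat p\mid v,b)\ge r(p\mid v,b)$.
   Context: Revenue: for a pricing function $q$ and budget $b$, $F=\{x\in[0,1]:q(x)\le b\}$, $u^*=\sup_{x\in F}(v(x)-q(x))$, $\mathrm{Dem}=\{x\in F:v(x)-q(x)=u^*\}$, $r(q\mid v,b)=\sup_{x\in\mathrm{Dem}}q(x)$. For convex $f:[0,1]\to\mathbb{R}$: $f'(x)=\sup_{\delta\in(0,x]}(f(x)-f(x-\delta))/\delta$ for $x>0$, $f'(0)=-\infty$, and $\ell(f\mid\beta)=\max\{x\in[0,1]:f'(x)\le\beta\}$. For non-decreasing $\mathbf{z}\in[0,1]^{k-1}$ and $\boldsymbol\alpha\in\mathbb{R}^k$, with $z_0=0$, $\mathrm{plin}(\mathbf{z},\boldsymbol\alpha)(0)=0$ and for $x>0$, $\mathrm{plin}(\mathbf{z},\boldsymbol\alpha)(x)=\sum_{j=1}^{i-1}\alpha_j(z_j-z_{j-1})+\alpha_i(x-z_{i-1})$, where $i\in[k]$ is largest with $z_{i-1}<x$. For continuous convex $f$ and $S=\{\alpha_1<\dots<\alpha_k\}$: $z_i=\ell(f\mid\alpha_i)$ for $i\in[k-1]$ and $\mathrm{disc}(f,S)=f(0)+\mathrm{plin}(\mathbf{z},\boldsymbol\alpha)$.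 *)

From mathcomp Require Import all_boot all_order all_algebra.
From mathcomp Require Import all_classical all_reals all_analysis.
Set Implicit Arguments. Unset Strict Implicit. Unset Printing Implicit Defensive.
Import Order.TTheory GRing.Theory Num.Theory.
Local Open Scope classical_set_scope.
Local Open Scope ring_scope.

Section Defs.
Variable R : realType.

Definition feasible (q : R -> R) (b : R) : set R :=
  [set x | 0 <= x <= 1 /\ q x <= b].

Definition opt_utility (q v : R -> R) (b : R) : R :=
  sup [set v x - q x | x in feasible q b].

Definition demand (q v : R -> R) (b : R) : set R :=
  [set x | feasible q b x /\ v x - q x = opt_utility q v b].

Definition revenue (q v : R -> R) (b : R) : R :=
  sup [set q x | x in demand q v b].

Definition lderiv (f : R -> R) (x : R) : \bar R :=
  if x <= 0 then -oo%E
  else ereal_sup [set ((f x - f (x - d)) / d)%:E | d in [set d | 0 < d <= x]].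

(* ell(f | beta) = max {x in [0,1] : f'(x) <= beta}, written as a sup
   (the max exists for convex continuous f) *)
Definition ell (f : R -> R) (beta : R) : R :=
  sup [set x | 0 <= x <= 1 /\ (lderiv f x <= beta%:E)%E].

(* plin(z, alpha)(x), with z_0 = 0, z_1..z_{k-1} given by z, alpha_1..alpha_k *)
Definition plin (z alpha : nat -> R) (k : nat) (x : R) : R :=
  let zz := fun i : nat => if i == 0%N then 0 else z i in
  if x <= 0 then 0
  else
    let i := (\max_(1 <= i < k.+1 | (zz i.-1 < x)%R) i)%N in
    \sum_(1 <= j < i) alpha j * (zz j - zz j.-1) + alpha i * (x - zz i.-1).

(* S = {alpha_1 < ... < alpha_k} given as the strictly increasing list s;
   alpha_i = nth 0 s (i-1) *)
Definition alpha_of (s : seq R) (i : nat) : R := nth 0 s i.-1.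

Definition disc (f : R -> R) (s : seq R) : R -> R :=
  fun x => f 0 + plin (fun i => ell f (alpha_of s i)) (alpha_of s) (size s) x.

End Defs.

From mathcomp Require Import all_boot all_order all_algebra.
From mathcomp Require Import all_classical all_reals all_analysis.
From mathcomp Require Import ring lra zify.

Set Implicit Arguments.
Unset Strict Implicit.
Unset Printing Implicit Defensive.

Import Order.TTheory GRing.Theory Num.Theory numFieldNormedType.Exports.
Local Open Scope classical_set_scope.
Local Open Scope ring_scope.

(* On [[0, 1]], [disc p s] is the continuous piecewise-linear function [G] with
   slope [alpha_i] between the breakpoints [z_(i-1)] and [z_i = ell p alpha_i].
   Since [tau] is one of the slopes, the utility [tau x - G x] increases up to
   [w = ell p tau] and decreases afterwards, while nothing beyond [w] is ever
   demanded under [p]; and below [w], convexity of [p] gives [p <= G].  So if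
   [G w <= b] the buyer facing [G] demands [w] and pays [G w >= p w], and
   otherwise demands a point where the whole budget [b] is spent; either way
   the payment is at least the price [p x <= b] of any [x] demanded under [p]. *)

Section Revenue.
Variable R : realType.
Implicit Types (q v : R -> R) (b c x y : R).

Lemma demand_of_maximizer q v b y : feasible q b y ->
  (forall x, feasible q b x -> v x - q x <= v y - q y) -> demand q v b y.
Proof.
move=> fy ymax; split => //; apply/le_anti/andP; split.
  apply: ub_le_sup; last by exists y.
  by exists (v y - q y) => _ [x fx <-]; exact: ymax.
by apply: ge_sup; [exists (v y - q y); exists y | move=> _ [x fx <-]; exact: ymax].
Qed.

Lemma demand_le_revenue q v b y : demand q v b y -> q y <= revenue q v b.
Proof.
move=> dy; apply: ub_le_sup; last by exists y.
by exists b => _ [x [[_ qb] _] <-].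
Qed.

(* The lower bound [0 <= c] is needed because [sup set0 = 0]. *)
Lemma revenue_le q v b c : 0 <= c ->
  (forall x, demand q v b x -> q x <= c) -> revenue q v b <= c.
Proof.
move=> c0 qc; have [[_ [x dx _]]|] := pselect ([set q x | x in demand q v b] !=set0).
  by apply: ge_sup; [exists (q x), x | move=> _ [y dy <-]; exact: qc].
by move/nonemptyPn; rewrite /revenue => ->; rewrite sup0.
Qed.

Lemma revenue_eq_on01 q1 q2 v b : (forall x, 0 <= x <= 1 -> q1 x = q2 x) ->
  revenue q1 v b = revenue q2 v b.
Proof.
move=> q12.
have eqF : feasible q1 b = feasible q2 b.
  by apply/seteqP; split => x [x01 qb]; split; rewrite // ?q12 // -q12.
have eqU : opt_utility q1 v b = opt_utility q2 v b.
  by rewrite /opt_utility eqF; congr sup; apply: eq_imagel => x [x01 _]; rewrite q12.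
have eqD : demand q1 v b = demand q2 v b.
  apply/seteqP; rewrite /demand eqU eqF.
  by split => x [[x01 qb] ux]; (split; first by []); rewrite ?q12 // -q12.
by rewrite /revenue eqD; congr sup; apply: eq_imagel => x [[x01 _] _]; rewrite q12.
Qed.

End Revenue.

Lemma within01_continuous_eps (R : realType) (f : R -> R) c e :
  {within `[0, 1]%classic, continuous f} -> 0 <= c <= 1 -> 0 < e ->
  exists2 d : R, 0 < d & forall y, 0 <= y <= 1 -> `|c - y| < d -> `|f c - f y| < e.
Proof.
move=> /subspace_continuousP fcont c01 e0.
have : `[0, 1]%classic c by rewrite /= in_itv.
move=> /fcont /cvgrPdist_lt /(_ e e0); rewrite near_withinE => /nbhs_ballP [d /= d0 fd].
by exists d => // y y01 cy; apply: fd; rewrite // /= in_itv.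
Qed.

Section LeftDerivative.
Variables (R : realType) (p : R -> R).
Implicit Types (beta c x : R).

Lemma lderiv_le0 x : x <= 0 -> lderiv p x = -oo%E.
Proof. by rewrite /lderiv => ->. Qed.

Lemma lderiv_leP beta x : 0 < x ->
  (lderiv p x <= beta%:E)%E <-> (forall d, 0 < d <= x -> p x - p (x - d) <= beta * d).
Proof.
move=> x0; rewrite /lderiv (leNgt x 0) x0 /=; split.
- move=> lb d /andP[d0 dx].
  rewrite -ler_pdivrMr // -lee_fin; apply: le_trans lb.
  by apply: ereal_sup_ubound; exists d; rewrite //= d0 dx.
- move=> slope; apply: ge_ereal_sup => _ [d /= /andP[d0 dx] <-].
  by rewrite lee_fin ler_pdivrMr //; apply: slope; rewrite d0 dx.
Qed.

Lemma le_ell beta x : 0 <= x <= 1 -> (lderiv p x <= beta%:E)%E -> x <= ell p beta.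
Proof. by move=> x01 lx; apply: ub_le_sup => //; exists 1 => y [/andP[_ ->]]. Qed.

Lemma ell_ge0 beta : 0 <= ell p beta.
Proof. by apply: le_ell; rewrite ?lexx ?ler01 // lderiv_le0 ?leNye. Qed.

Lemma ell_le1 beta : ell p beta <= 1.
Proof.
apply: ge_sup; last by move=> x [/andP[_ ->]].
by exists 0; rewrite /= lexx ler01 lderiv_le0 ?leNye.
Qed.

Lemma ell_nondecreasing : {homo ell p : beta beta' / beta <= beta'}.
Proof.
move=> beta beta' bb'; apply: ge_sup.
  by exists 0; rewrite /= lexx ler01 lderiv_le0 ?leNye.
by move=> x [x01 lx]; apply: le_ell => //; apply: le_trans lx _; rewrite lee_fin.
Qed.

Lemma ell_gt beta c : c < ell p beta ->
  exists x, [/\ 0 <= x <= 1, (lderiv p x <= beta%:E)%E & c < x].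
Proof.
move/sup_gt => [|x [x01 lx] cx]; last by exists x.
by exists 0; rewrite /= lexx ler01 lderiv_le0 ?leNye.
Qed.

Lemma demand_le_ell tau b x : 0 <= tau ->
  (forall y, 0 <= y <= 1 -> 0 <= p y) ->
  (forall y z, 0 <= y <= 1 -> 0 <= z <= 1 -> y <= z -> p y <= p z) ->
  demand p (fun y => tau * y) b x -> x <= ell p tau.
Proof.
move=> tau0 p_ge0 p_mono [[/andP[x0 x1] pxb] ux]; apply: le_ell; first by rewrite x0.
case: (lerP x 0) => [xle0|xgt0]; first by rewrite lderiv_le0 ?leNye.
apply/lderiv_leP => // d /andP[d0 dx].
have xd01 : 0 <= x - d <= 1 by apply/andP; split; lra.
have fxd : feasible p b (x - d).
  by split => //; apply: le_trans pxb; apply: p_mono => //; [rewrite x0 x1 | lra].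
have : tau * (x - d) - p (x - d) <= opt_utility p (fun y => tau * y) b.
  apply: ub_le_sup; last by exists (x - d).
  exists tau => _ [y [y01 _] <-]; have [y0 y1] := andP y01.
  have : tau * y <= tau by rewrite -{2}(mulr1 tau) ler_wpM2l.
  by have := p_ge0 y y01; lra.
by rewrite -ux mulrBr; lra.
Qed.

End LeftDerivative.

Section ConvexPrice.
Variables (R : realType) (p : R -> R).
Hypothesis p_conv : forall x y t, 0 <= x <= 1 -> 0 <= y <= 1 -> 0 <= t <= 1 ->
  p (t * x + (1 - t) * y) <= t * p x + (1 - t) * p y.
Hypothesis p_cont : {within `[0, 1]%classic, continuous p}.

Lemma convex_chord a c x : 0 <= a -> a <= c -> c <= x -> a < x -> x <= 1 ->
  p c - p a <= (c - a) / (x - a) * (p x - p a).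
Proof.
move=> a0 ac cx ax x1.
have xa0 : 0 < x - a by rewrite subr_gt0.
set t := (c - a) / (x - a).
have t01 : 0 <= t <= 1 by rewrite divr_ge0 ?ler_pdivrMr /=; lra.
have -> : c = t * x + (1 - t) * a by rewrite /t; field; rewrite gt_eqF.
have x01 : 0 <= x <= 1 by rewrite x1 (le_trans a0 (ltW ax)).
have a01 : 0 <= a <= 1 by rewrite a0 (le_trans (ltW ax) x1).
by have := @p_conv x a t x01 a01 t01; lra.
Qed.

Lemma lderiv_chord beta a c x : 0 <= a -> a <= c -> c <= x -> x <= 1 ->
  (lderiv p x <= beta%:E)%E -> p c - p a <= beta * (c - a).
Proof.
move=> a0 ac cx x1 lx; have [ax|xa] := ltP a x; last first.
  have -> : c = a by apply/le_anti; rewrite ac (le_trans cx xa).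
  by rewrite !subrr mulr0.
have x0 : 0 < x by exact: le_lt_trans ax.
have slope : p x - p a <= beta * (x - a).
  have := (lderiv_leP p beta x0).1 lx (x - a); rewrite subKr.
  by apply; rewrite subr_gt0 ax gerBl.
apply: le_trans (convex_chord a0 ac cx ax x1) _.
have t0 : 0 <= (c - a) / (x - a) by rewrite divr_ge0 ?subr_ge0 // ltW.
apply: le_trans (ler_wpM2l t0 slope) _.
by rewrite mulrCA divfK ?gt_eqF ?subr_gt0.
Qed.

(* Approach [c] from the left by points [x] where [lderiv p x <= beta]: the chord
   bound applies to those above [c], and continuity of [p] at [c] to the rest. *)
Lemma ell_lipschitz beta a c : 0 <= beta -> 0 <= a -> a <= c -> c <= ell p beta ->
  p c - p a <= beta * (c - a).
Proof.
move=> beta0 a0 ac cl; have c1 := le_trans cl (ell_le1 p beta).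
move: (ac); rewrite le_eqVlt => /orP[/eqP <-|ac']; first by rewrite !subrr mulr0.
apply/ler_addgt0Pr => e e0.
have c01 : 0 <= c <= 1 by rewrite c1 (le_trans a0 ac).
have [d d0 near_c] := within01_continuous_eps p_cont c01 e0.
set eta := Num.min (c - a) d.
have eta0 : 0 < eta by rewrite lt_min subr_gt0 ac' d0.
have [eta_ca eta_d] : eta <= c - a /\ eta <= d by rewrite !ge_min !lexx orbT.
have [x [/andP[x0 x1] lx cx]] : exists x, [/\ 0 <= x <= 1, (lderiv p x <= beta%:E)%E
    & c - eta < x] by apply: ell_gt; apply: lt_le_trans cl; rewrite ltrBlDr ltrDl.
have ax : a <= x by lra.
have [xc|cx'] := ltP x c; last first.
  by apply: le_trans (lderiv_chord a0 ac cx' x1 lx) _; rewrite lerDl ltW.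
have slope := lderiv_chord a0 ax (lexx x) x1 lx.
have : `|p c - p x| < e.
  apply: near_c; first by rewrite x0 x1.
  by rewrite gtr0_norm ?subr_gt0 //; lra.
have : beta * (x - a) <= beta * (c - a) by rewrite ler_wpM2l // lerB // ltW.
move=> /(le_trans slope) h /(le_lt_trans (ler_norm _)); lra.
Qed.

End ConvexPrice.

Lemma min_increment_le (R : realType) (x y a c : R) : x <= y -> a <= c ->
  Num.min y a - Num.min x a <= Num.min y c - Num.min x c.
Proof.
move=> xy ac.
by case: (leP y a) => ?; case: (leP x a) => ?; case: (leP y c) => ?; case: (leP x c) => ?; lra.
Qed.

Section PiecewiseLinear.
Variables (R : realType) (k : nat) (alpha Z : nat -> R).

(* [Z 0 <= ... <= Z k] are the breakpoints and [alpha i] is the slope on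
   [[Z i.-1, Z i]]. *)
Definition pwlin (x : R) : R :=
  \sum_(1 <= i < k.+1) alpha i * (Num.min x (Z i) - Num.min x (Z i.-1)).

(* The length of [[x, y] `&` [Z i.-1, Z i]]. *)
Definition overlap (x y : R) (i : nat) : R :=
  (Num.min y (Z i) - Num.min x (Z i)) - (Num.min y (Z i.-1) - Num.min x (Z i.-1)).

Hypothesis Z_mono : forall i j, (i <= j <= k)%N -> Z i <= Z j.
Hypothesis Z0 : Z 0 = 0.
Hypothesis Zk : Z k = 1.

Lemma Z_ge0 i : (i <= k)%N -> 0 <= Z i.
Proof. by move=> ik; rewrite -Z0 Z_mono. Qed.

Lemma segment_exists x : 0 < x -> x <= 1 ->
  exists m, (0 < m <= k)%N /\ Z m.-1 < x <= Z m.
Proof.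
move=> x0 x1; have ex : exists m, x <= Z m by exists k; rewrite Zk.
case: (@ex_minnP (fun m => x <= Z m) ex) => m xZm m_min.
have mk : (m <= k)%N by apply: m_min; rewrite Zk.
have m0 : (0 < m)%N by rewrite lt0n; apply: contraTneq xZm => ->; rewrite Z0 -ltNge.
exists m; split; first by rewrite m0 mk.
by rewrite xZm andbT ltNge; apply/negP => /m_min; lia.
Qed.

Lemma pwlin_segment m x : (0 < m <= k)%N -> Z m.-1 < x <= Z m ->
  pwlin x = \sum_(1 <= j < m) alpha j * (Z j - Z j.-1) + alpha m * (x - Z m.-1).
Proof.
move=> /andP[m0 mk] /andP[Zx xZ].
have tail : \sum_(m.+1 <= i < k.+1) alpha i * (Num.min x (Z i) - Num.min x (Z i.-1)) = 0.
  rewrite big_nat big1 // => i /andP[mi ik].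
  by rewrite !min_l ?subrr ?mulr0 //; apply: le_trans xZ (Z_mono _); lia.
rewrite /pwlin (big_cat_nat _ (n := m)) //; last by rewrite ltnW.
rewrite [\sum_(m <= i < _) _]big_ltn ?ltnS // tail addr0.
rewrite min_l // min_r ?ltW //; congr (_ + _).
apply: eq_big_nat => i /andP[i1 im].
by rewrite !min_r //; apply: le_trans (ltW Zx); apply: Z_mono; lia.
Qed.

Lemma pwlin0 : pwlin 0 = 0.
Proof.
by rewrite /pwlin big_nat big1 // => i /andP[_ ik]; rewrite !min_l ?Z_ge0 ?subrr ?mulr0 //; lia.
Qed.

Lemma plin_pwlin (z : nat -> R) x : (forall i, (0 < i < k)%N -> Z i = z i) ->
  0 <= x <= 1 -> plin z alpha k x = pwlin x.
Proof.
move=> Zz /andP[x0 x1]; rewrite /plin; case: (leP x 0) => [xle0|xgt0].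
  have -> : x = 0 by apply/le_anti; rewrite xle0 x0.
  by rewrite pwlin0.
have zZ i : (i < k)%N -> (if i == 0%N then 0 else z i) = Z i.
  by move=> ik; case: eqP => [->|/eqP i0]; rewrite ?Z0 // Zz // lt0n i0.
have [m [/andP[m0 mk] /andP[Zx xZ]]] := segment_exists xgt0 x1.
have -> : (\max_(1 <= i < k.+1 | ((if i.-1 == 0%N then 0 else z i.-1) < x)%R) i)%N = m.
  apply/eqP; rewrite eqn_leq; apply/andP; split.
    apply/bigmax_leqP_seq => i; rewrite mem_index_iota => /andP[i1 ik].
    rewrite zZ; last by lia.
    apply: contraTT; rewrite -ltnNge -leNgt => mi.
    by apply: le_trans xZ (Z_mono _); lia.
  by apply: leq_bigmax_seq; rewrite ?mem_index_iota ?zZ //; lia.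
rewrite (pwlin_segment (m := m)) ?m0 ?Zx //.
congr (_ + _ * (_ - _)); last by rewrite zZ //; lia.
by apply: eq_big_nat => i /andP[i1 im]; rewrite !zZ //; lia.
Qed.

Lemma pwlinB x y : pwlin y - pwlin x = \sum_(1 <= i < k.+1) alpha i * overlap x y i.
Proof. by rewrite /pwlin -sumrB; apply: eq_bigr => i _; rewrite /overlap; ring. Qed.

Lemma overlap_ge0 x y i : x <= y -> (i <= k)%N -> 0 <= overlap x y i.
Proof.
move=> xy ik; rewrite /overlap subr_ge0; apply: min_increment_le => //.
by apply: Z_mono; rewrite leq_pred.
Qed.

Lemma sum_overlap x y : 0 <= x -> x <= y -> y <= 1 ->
  \sum_(1 <= i < k.+1) overlap x y i = y - x.
Proof.
move=> x0 xy y1; rewrite big_add1 /= telescope_sumr // Zk Z0.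
by rewrite (min_l y1) (min_l (le_trans xy y1)) (min_r (le_trans x0 xy)) (min_r x0) subrr subr0.
Qed.

Lemma overlap_eq0_le x y i : (0 < i <= k)%N -> x <= y -> y <= Z i.-1 -> overlap x y i = 0.
Proof.
move=> ik xy yZ; have ZZ : Z i.-1 <= Z i by apply: Z_mono; lia.
have xZ := le_trans xy yZ.
by rewrite /overlap (min_l (le_trans yZ ZZ)) (min_l (le_trans xZ ZZ)) (min_l yZ) (min_l xZ) !subrr.
Qed.

Lemma overlap_eq0_ge x y i : (0 < i <= k)%N -> x <= y -> Z i <= x -> overlap x y i = 0.
Proof.
move=> ik xy Zx; have ZZ : Z i.-1 <= Z i by apply: Z_mono; lia.
have Zy := le_trans Zx xy.
by rewrite /overlap (min_r Zy) (min_r Zx) (min_r (le_trans ZZ Zy)) (min_r (le_trans ZZ Zx)) !subrr.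
Qed.

Hypothesis alpha_ge0 : forall i, (0 < i <= k)%N -> 0 <= alpha i.
Hypothesis alpha_mono : forall i j, (0 < i)%N -> (i <= j <= k)%N -> alpha i <= alpha j.

Lemma pwlin_nondecreasing : {homo pwlin : x y / x <= y}.
Proof.
move=> x y xy; rewrite -subr_ge0 pwlinB big_nat; apply: sumr_ge0 => i /andP[i1 ik].
by rewrite mulr_ge0 ?alpha_ge0 ?overlap_ge0 //; lia.
Qed.

Lemma pwlin_lipschitz x y : 0 <= x -> x <= y -> y <= 1 ->
  pwlin y - pwlin x <= alpha k * (y - x).
Proof.
move=> x0 xy y1; rewrite pwlinB -sum_overlap // mulr_sumr !big_nat.
by apply: ler_sum => i /andP[i1 ik]; rewrite ler_wpM2r ?overlap_ge0 ?alpha_mono //; lia.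
Qed.

Variables tau w : R.
Hypothesis alpha_gt : forall i, (0 < i <= k)%N -> tau < alpha i -> w <= Z i.-1.
Hypothesis alpha_lt : forall i, (0 < i <= k)%N -> alpha i < tau -> Z i <= w.

Lemma utilityB x y : 0 <= x -> x <= y -> y <= 1 ->
  (tau * y - pwlin y) - (tau * x - pwlin x) =
  \sum_(1 <= i < k.+1) (tau - alpha i) * overlap x y i.
Proof.
move=> x0 xy y1; rewrite (eq_bigr (fun i => tau * overlap x y i - alpha i * overlap x y i)).
  by rewrite sumrB -mulr_sumr sum_overlap // -pwlinB; ring.
by move=> i _; ring.
Qed.

Lemma utility_nondecreasing x y : 0 <= x -> x <= y -> y <= w -> w <= 1 ->
  tau * x - pwlin x <= tau * y - pwlin y.
Proof.
move=> x0 xy yw w1; rewrite -subr_ge0 utilityB ?(le_trans yw) // big_nat.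
apply: sumr_ge0 => i /andP[i1 ik]; rewrite ltnS in ik.
have [tau_le|tau_gt] := leP (alpha i) tau.
  by apply: mulr_ge0; [rewrite subr_ge0 | exact: overlap_ge0].
by rewrite overlap_eq0_le ?i1 ?mulr0 // (le_trans yw) ?alpha_gt ?i1.
Qed.

Lemma utility_nonincreasing x y : 0 <= w -> w <= x -> x <= y -> y <= 1 ->
  tau * y - pwlin y <= tau * x - pwlin x.
Proof.
move=> w0 wx xy y1; rewrite -subr_le0 utilityB ?(le_trans w0) // big_nat.
apply: sumr_le0 => i /andP[i1 ik]; rewrite ltnS in ik.
have [tau_le|tau_gt] := leP tau (alpha i).
  by apply: mulr_le0_ge0; [rewrite subr_le0 | exact: overlap_ge0].
by rewrite overlap_eq0_ge ?i1 ?mulr0 // (le_trans _ wx) ?alpha_lt ?i1.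
Qed.

End PiecewiseLinear.

Section Sublevel.
Variables (R : realType) (G : R -> R) (K : R).
Hypothesis K_gt0 : 0 < K.
Hypothesis G_mono : {homo G : x y / x <= y}.
Hypothesis G_lip : forall x y, 0 <= x -> x <= y -> y <= 1 -> G y - G x <= K * (y - x).

Lemma sublevel_max b w : 0 <= w <= 1 -> G 0 <= b -> b < G w ->
  exists y, [/\ feasible G b y, y <= w, G y = b & forall x, feasible G b x -> x <= y].
Proof.
move=> /andP[w0 w1] G0b bGw; set F := feasible G b.
have F0 : F 0 by split; rewrite ?lexx ?ler01.
have F_ub : has_ubound F by exists 1 => x [/andP[_ ->]].
have F_le_sup x : F x -> x <= sup F by move=> Fx; apply: ub_le_sup.
have y0 : 0 <= sup F := F_le_sup 0 F0.
have y1 : sup F <= 1 by apply: ge_sup; [exists 0 | move=> x [/andP[_ ->]]].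
have Gy_le : G (sup F) <= b.
  apply/ler_addgt0Pr => e e0.
  have [x Fx yx] := sup_adherent (divr_gt0 e0 K_gt0) (conj (ex_intro _ 0 F0) F_ub).
  have [[/andP[x0 _] Gxb] xy] := (Fx, F_le_sup x Fx).
  have : K * (sup F - x) < e by rewrite mulrC -ltr_pdivlMr //; lra.
  by have := G_lip x0 xy y1; lra.
have yw : sup F < w by rewrite ltNge; apply/negP => /G_mono; lra.
have Gy_ge : b <= G (sup F).
  rewrite leNgt; apply/negP => Gyb.
  set eta := Num.min (w - sup F) ((b - G (sup F)) / K).
  have eta0 : 0 < eta by rewrite lt_min !subr_gt0 yw divr_gt0 ?subr_gt0.
  have [eta_w eta_b] : eta <= w - sup F /\ eta <= (b - G (sup F)) / K.
    by rewrite !ge_min !lexx orbT.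
  have : F (sup F + eta).
    split; first by apply/andP; split; lra.
    have y_eta : sup F <= sup F + eta by rewrite lerDl ltW.
    have := G_lip y0 y_eta ltac:(lra).
    by move: eta_b; rewrite ler_pdivlMr // mulrC; lra.
  by move/F_le_sup; lra.
exists (sup F); split => //; first by split; rewrite ?y0.
  exact: ltW.
by apply/le_anti; rewrite Gy_le Gy_ge.
Qed.

End Sublevel.

Section Discretization.
Variables (R : realType) (p : R -> R) (s : seq R) (tau : R).
Hypothesis s_sorted : sorted <%R s.
Hypothesis s_ge0 : all (fun a => 0 <= a) s.
Hypothesis tau_s : tau \in s.

Local Notation k := (size s).
Local Notation alpha := (alpha_of s).

Lemma alpha_ge0 i : 0 <= alpha i.
Proof.
rewrite /alpha_of; have [ik|ki] := ltnP i.-1 k; last by rewrite nth_default.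
exact: (allP s_ge0) (mem_nth 0 ik).
Qed.

Lemma alpha_leE i j : (0 < i <= k)%N -> (0 < j <= k)%N ->
  (alpha i <= alpha j) = (i <= j)%N.
Proof.
move=> /andP[i0 ik] /andP[j0 jk].
have [ik' jk'] : (i.-1 < k)%N /\ (j.-1 < k)%N by lia.
rewrite /alpha_of lt_sorted_leq_nth ?inE //.
by case: i j i0 j0 {ik jk ik' jk'} => [|i] [|j].
Qed.

Lemma alpha_nondecreasing i j : (0 < i)%N -> (i <= j <= k)%N -> alpha i <= alpha j.
Proof. by move=> i0 /andP[ij jk]; rewrite alpha_leE ?i0 ?(leq_trans ij) ?(leq_trans i0). Qed.

Lemma tau_alpha : exists2 j, (0 < j <= k)%N & alpha j = tau.
Proof. by exists (index tau s).+1; rewrite /alpha_of ?nth_index //= index_mem. Qed.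

(* The [z_i] of [disc p s], completed by [z_0 = 0] and [z_k = 1]. *)
Definition breakpoint (i : nat) : R :=
  if i == 0%N then 0 else if (i < k)%N then ell p (alpha i) else 1.

Lemma size_gt0 : (0 < k)%N.
Proof. by case: s tau_s. Qed.

Lemma breakpoint01 i : 0 <= breakpoint i <= 1.
Proof.
rewrite /breakpoint; case: ifP => _; first by rewrite lexx ler01.
by case: ifP => _; rewrite ?ell_ge0 ?ell_le1 ?ler01 ?lexx.
Qed.

Lemma breakpoint_last j : (k <= j)%N -> breakpoint j = 1.
Proof.
move=> kj; have j0 : j != 0%N by have := size_gt0; lia.
by rewrite /breakpoint (negPf j0) ltnNge kj.
Qed.

Lemma breakpoint_ell i : (0 < i < k)%N -> breakpoint i = ell p (alpha i).
Proof. by case/andP; rewrite /breakpoint lt0n => /negPf -> ->. Qed.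

Lemma breakpoint_nondecreasing i j : (i <= j <= k)%N -> breakpoint i <= breakpoint j.
Proof.
move=> /andP[ij jk]; have [->|i0] := posnP i; first by case/andP: (breakpoint01 j).
have [jk'|kj] := ltnP j k; last by rewrite (breakpoint_last kj); case/andP: (breakpoint01 i).
rewrite !breakpoint_ell ?i0 ?(leq_ltn_trans ij) ?(leq_trans i0) //.
by apply: ell_nondecreasing; apply: alpha_nondecreasing; lia.
Qed.

Lemma breakpoint_pred_ge i : (0 < i <= k)%N -> tau < alpha i -> ell p tau <= breakpoint i.-1.
Proof.
move=> ik; have [j jk <-] := tau_alpha; rewrite ltNge alpha_leE // -ltnNge => ji.
rewrite breakpoint_ell; last by lia.
by apply: ell_nondecreasing; apply: alpha_nondecreasing; lia.
Qed.

Lemma breakpoint_le_ell i : (0 < i <= k)%N -> alpha i < tau -> breakpoint i <= ell p tau.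
Proof.
move=> ik; have [j jk <-] := tau_alpha; rewrite ltNge alpha_leE // -ltnNge => ij.
rewrite breakpoint_ell; last by lia.
by apply: ell_nondecreasing; apply: alpha_nondecreasing; lia.
Qed.

Hypothesis p0 : p 0 = 0.

Lemma disc_pwlin x : 0 <= x <= 1 -> disc p s x = pwlin k alpha breakpoint x.
Proof.
move=> x01; rewrite /disc p0 add0r; apply: plin_pwlin => //.
- exact: breakpoint_nondecreasing.
- exact: breakpoint_last.
- by move=> i /breakpoint_ell.
Qed.

Hypothesis p_conv : forall x y t, 0 <= x <= 1 -> 0 <= y <= 1 -> 0 <= t <= 1 ->
  p (t * x + (1 - t) * y) <= t * p x + (1 - t) * p y.
Hypothesis p_cont : {within `[0, 1]%classic, continuous p}.

Lemma le_pwlin x : 0 <= x -> x <= ell p (alpha k) -> p x <= pwlin k alpha breakpoint x.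
Proof.
move=> x0 xl; have x1 := le_trans xl (ell_le1 p _).
have -> : p x = \sum_(1 <= i < k.+1)
    (p (Num.min x (breakpoint i)) - p (Num.min x (breakpoint i.-1))).
  by rewrite big_add1 /= telescope_sumr // breakpoint_last // min_l // min_r // p0 subr0.
rewrite /pwlin !big_nat; apply: ler_sum => i /andP[i1 ik]; rewrite ltnS in ik.
have ZZ : breakpoint i.-1 <= breakpoint i by apply: breakpoint_nondecreasing; lia.
apply: (ell_lipschitz p_conv p_cont); first exact: alpha_ge0.
- by rewrite le_min x0; case/andP: (breakpoint01 i.-1).
- exact: le_min2 (lexx x) ZZ.
have [ik'|ki] := ltnP i k; first by rewrite -breakpoint_ell ?i1 // ge_min lexx orbT.
have -> : i = k by lia.
by rewrite ge_min xl.
Qed.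

Variable b : R.
Hypothesis p_ge0 : forall x, 0 <= x <= 1 -> 0 <= p x.
Hypothesis p_mono : forall x y, 0 <= x <= 1 -> 0 <= y <= 1 -> x <= y -> p x <= p y.

Local Notation G := (pwlin k alpha breakpoint).
Local Notation w := (ell p tau).

Lemma pwlin_breakpoint0 : G 0 = 0.
Proof. exact: (pwlin0 _ breakpoint_nondecreasing erefl). Qed.

Lemma pwlin_breakpoint_nondecreasing : {homo G : x y / x <= y}.
Proof. exact: (pwlin_nondecreasing breakpoint_nondecreasing (fun i _ => alpha_ge0 i)). Qed.

Lemma demand_peak : G w <= b -> demand G (fun x => tau * x) b w.
Proof.
move=> Gw; apply: demand_of_maximizer; first by split; rewrite ?ell_ge0 ?ell_le1.
move=> x [/andP[x0 x1] _]; have [xw|wx] := leP x w.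
  exact: (utility_nondecreasing breakpoint_nondecreasing erefl (breakpoint_last (leqnn k))
           breakpoint_pred_ge x0 xw (lexx _) (ell_le1 p tau)).
exact: (utility_nonincreasing breakpoint_nondecreasing erefl (breakpoint_last (leqnn k))
         breakpoint_le_ell (ell_ge0 p tau) (lexx _) (ltW wx) x1).
Qed.

Hypothesis b_ge0 : 0 <= b.

Lemma demand_budget : b < G w -> exists2 y, demand G (fun x => tau * x) b y & G y = b.
Proof.
move=> bGw; have Zk := breakpoint_last (leqnn k).
have G_lip x y : 0 <= x -> x <= y -> y <= 1 -> G y - G x <= (alpha k + 1) * (y - x).
  move=> x0 xy y1; apply: le_trans (pwlin_lipschitz breakpoint_nondecreasing erefl Zk
    alpha_nondecreasing x0 xy y1) _.
  by rewrite ler_wpM2r ?subr_ge0 // lerDl.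
have w01 : 0 <= w <= 1 by rewrite ell_ge0 ell_le1.
have G0b : G 0 <= b by rewrite pwlin_breakpoint0.
have [y [Fy yw Gy y_max]] := sublevel_max (ltr_pwDr ltr01 (alpha_ge0 k))
  pwlin_breakpoint_nondecreasing G_lip w01 G0b bGw.
exists y => //; apply: demand_of_maximizer => // x Fx.
case: (Fx) => /andP[x0 _] _.
exact: (utility_nondecreasing breakpoint_nondecreasing erefl Zk breakpoint_pred_ge
  x0 (y_max x Fx) yw (ell_le1 p tau)).
Qed.

Lemma revenue_le_revenue_disc :
  revenue p (fun x => tau * x) b <= revenue (disc p s) (fun x => tau * x) b.
Proof.
rewrite (revenue_eq_on01 _ _ disc_pwlin).
suff [y dy p_le] : exists2 y, demand G (fun x => tau * x) b y &
    forall x, demand p (fun x => tau * x) b x -> p x <= G y.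
  apply: le_trans (demand_le_revenue dy); apply: revenue_le p_le.
  case: dy => [[/andP[y0 _] _] _].
  by rewrite -pwlin_breakpoint0 pwlin_breakpoint_nondecreasing.
have [Gw|Gw] := leP (G w) b; last first.
  by have [y dy Gy] := demand_budget Gw; exists y => // x [[_ pxb] _]; rewrite Gy.
exists w; first exact: demand_peak.
move=> x dx; have xw := demand_le_ell (allP s_ge0 _ tau_s) p_ge0 p_mono dx.
case: dx => [[/andP[x0 _] _] _].
have [j jk tau_j] := tau_alpha.
have wl : w <= ell p (alpha k).
  by apply: ell_nondecreasing; rewrite -tau_j alpha_nondecreasing //; lia.
by apply: le_trans (le_pwlin x0 (le_trans xw wl)) (pwlin_breakpoint_nondecreasing xw).
Qed.

End Discretization.

Theorem mainTheorem17 (R : realType) (p : R -> R) (tau : R) (s : seq R) (b : R) :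
  (forall x, 0 <= x <= 1 -> 0 <= p x) ->
  (forall x y, 0 <= x <= 1 -> 0 <= y <= 1 -> x <= y -> p x <= p y) ->
  {within `[0, 1]%classic, continuous p} ->
  (forall x y t, 0 <= x <= 1 -> 0 <= y <= 1 -> 0 <= t <= 1 ->
     p (t * x + (1 - t) * y) <= t * p x + (1 - t) * p y) ->
  p 0 = 0 ->
  0 <= tau ->
  sorted <%R s -> all (fun a => 0 <= a) s -> tau \in s ->
  0 <= b ->
  revenue (disc p s) (fun x => tau * x) b >= revenue p (fun x => tau * x) b.
Proof.
move=> p_ge0 p_mono p_cont p_conv p0 _ s_sorted s_ge0 tau_s b_ge0.
exact: revenue_le_revenue_disc.
Qed.
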